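(* The graphs $C_3+(P_2\cup P_1)$ and $P_3+P_3$ are of class $\mathcal C_0$.
   Context: All graphs are finite, simple and undirected. $C_n$ and $P_n$ denote the cycle and the path on $n$ vertices; $G_1\cup G_2$ is the disjoint union. The join $G+H$ is obtained from vertex-disjoint copies of $G$ and $H$ by adding all edges between $V(G)$ and $V(H)$. A drawing is 1-planar if each edge is crossed at most once (adjacent edges never cross, no edge crosses itself); a graph is 1-planar if it has such a drawing. For a 1-planar drawing $D$, $D^\times$ is the plane graph obtained by turning each crossing into a new degree-4 vertex (a false vertex); $N_{D^\times}(c)$ is the neighbour set of a false vertex $c$. A 1-planar graph is of class $\mathcal C_0$ if it has a 1-planar drawing $D$ with $|N_{D^\times}(c_1)\cap N_{D^\times}(c_2)|=0$ for all distinct false vertices $c_1,c_2$. *)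

From mathcomp Require Import all_boot.
From Stdlib Require Import Reals.
Set Implicit Arguments. Unset Strict Implicit. Unset Printing Implicit Defensive.

(** Finite simple graphs: a finite vertex type and an adjacency relation
    (all concrete graphs below are symmetric and irreflexive by construction). *)
Record graph := Graph { vert : finType; adj : rel vert }.

Definition cycle_graph (n : nat) : graph :=
  @Graph 'I_n (fun i j => ((i.+1 %% n == j) || (j.+1 %% n == i)) && (i != j)).
Definition path_graph (n : nat) : graph :=
  @Graph 'I_n (fun i j => (i.+1 == j :> nat) || (j.+1 == i :> nat)).

Definition dunion (G H : graph) : graph :=
  @Graph (vert G + vert H)%type (fun x y =>
    match x, y with
    | inl a, inl b => adj a b
    | inr a, inr b => adj a b
    | _, _ => false
    end).
Definition gjoin (G H : graph) : graph :=
  @Graph (vert G + vert H)%type (fun x y =>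
    match x, y with
    | inl a, inl b => adj a b
    | inr a, inr b => adj a b
    | _, _ => true
    end).

(** Drawings in the plane R^2: vertices are points, the edge uv is a
    Jordan arc [0,1] -> R^2 given by [arc u v] (the same curve traversed
    backwards for [arc v u]). *)
Definition point := (R * R)%type.

Local Open Scope R_scope.

Definition same_edge (V : Type) (u v x y : V) : Prop :=
  (u = x /\ v = y) \/ (u = y /\ v = x).

Definition good_drawing (G : graph) (pos : vert G -> point)
    (arc : vert G -> vert G -> R -> point) : Prop :=
  (forall a b : vert G, pos a = pos b -> a = b) /\
  forall u v : vert G, adj u v ->
    arc u v 0 = pos u /\ arc u v 1 = pos v /\
    (forall t, 0 <= t <= 1 -> arc v u t = arc u v (1 - t)) /\
    (forall t, 0 <= t <= 1 ->
        continuity_pt (fun s => fst (arc u v s)) t /\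
        continuity_pt (fun s => snd (arc u v s)) t) /\
    (forall s t, 0 <= s <= 1 -> 0 <= t <= 1 -> arc u v s = arc u v t -> s = t) /\
    (forall t (w : vert G), 0 < t < 1 -> arc u v t <> pos w).

(** p is a crossing point of the distinct edges uv and xy (a false vertex of D^x):
    a common point of their interiors. *)
Definition crossing (G : graph) (arc : vert G -> vert G -> R -> point)
    (u v x y : vert G) (p : point) : Prop :=
  adj u v /\ adj x y /\ ~ same_edge u v x y /\
  exists s t, 0 < s < 1 /\ 0 < t < 1 /\ arc u v s = p /\ arc x y t = p.

Definition one_planar_drawing (G : graph) (pos : vert G -> point)
    (arc : vert G -> vert G -> R -> point) : Prop :=
  good_drawing pos arc /\
  (forall u v x y p, crossing arc u v x y p ->
      u <> x /\ u <> y /\ v <> x /\ v <> y) /\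
  (forall u v x y p x' y' p', crossing arc u v x y p -> crossing arc u v x' y' p' ->
      p = p' /\ same_edge x y x' y').

(** Neighbourhood in D^x of the false vertex at the crossing of uv and xy. *)
Definition false_nbr (V : Type) (u v x y w : V) : Prop :=
  w = u \/ w = v \/ w = x \/ w = y.

Definition class_C0 (G : graph) : Prop :=
  exists (pos : vert G -> point) (arc : vert G -> vert G -> R -> point),
    one_planar_drawing pos arc /\
    forall u v x y p u' v' x' y' p',
      crossing arc u v x y p -> crossing arc u' v' x' y' p' -> p <> p' ->
      forall w, false_nbr u v x y w -> ~ false_nbr u' v' x' y' w.

(* Both graphs have a straight-line drawing with exactly one crossing, between
   two edges with four distinct end vertices.  Such a drawing is 1-planar, and
   the class C_0 condition, which only constrains pairs of distinct false
   vertices, holds vacuously. *)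
From mathcomp Require Import all_boot.
From Stdlib Require Import Reals Lra.
Open Scope R_scope.

Definition seg (P Q : point) (t : R) : point :=
  (fst P + t * (fst Q - fst P), snd P + t * (snd Q - snd P)).

Lemma seg0 P Q : seg P Q 0 = P.
Proof. by case: P => x y; rewrite /seg /=; f_equal; ring. Qed.

Lemma seg1 P Q : seg P Q 1 = Q.
Proof. by case: P Q => [x y] [x' y']; rewrite /seg /=; f_equal; ring. Qed.

Lemma seg_rev P Q t : seg Q P t = seg P Q (1 - t).
Proof. by case: P Q => [x y] [x' y']; rewrite /seg /=; f_equal; ring. Qed.

Lemma seg_continuity P Q t :
  continuity_pt (fun s => fst (seg P Q s)) t /\
  continuity_pt (fun s => snd (seg P Q s)) t.
Proof. rewrite /seg /=; split; reg. Qed.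

Lemma seg_inj P Q s t : P <> Q -> seg P Q s = seg P Q t -> s = t.
Proof.
case: P Q => [x y] [x' y'] nPQ; rewrite /seg /= => -[Ex Ey].
have [dx | dx] := Req_dec (x' - x) 0.
- have [dy | dy] := Req_dec (y' - y) 0.
  + by exfalso; apply: nPQ; f_equal; lra.
  + by apply: (Rmult_eq_reg_r (y' - y)) => //; lra.
- by apply: (Rmult_eq_reg_r (x' - x)) => //; lra.
Qed.

Definition straight {G : graph} (pos : vert G -> point) (u v : vert G) :=
  seg (pos u) (pos v).

(* Injectivity of the arcs needs no separate check: a degenerate segment would
   pass through its end vertex at time 1/2. *)
Lemma straight_good_drawing (G : graph) (pos : vert G -> point) :
  (forall a b, pos a = pos b -> a = b) ->
  (forall u v t w, adj u v -> 0 < t < 1 -> seg (pos u) (pos v) t <> pos w) ->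
  good_drawing pos (straight pos).
Proof.
rewrite /straight => pos_inj avoid; split => // u v uv.
have nPQ : pos u <> pos v.
  move=> Epos; apply: (avoid u v (1/2) u uv); first lra.
  by rewrite /seg Epos; case: (pos v) => x y /=; f_equal; ring.
split; first exact: seg0.
split; first exact: seg1.
split; first by move=> t _; exact: seg_rev.
split; first by move=> t _; exact: seg_continuity.
split; last by move=> t w; exact: avoid.
by move=> s t _ _; exact: seg_inj.
Qed.

Lemma same_edge_sym {V : Type} {u v x y : V} :
  same_edge u v x y -> same_edge x y u v.
Proof. by rewrite /same_edge; intuition. Qed.

Lemma same_edge_trans {V : Type} {u v x y x' y' : V} :
  same_edge u v x y -> same_edge x y x' y' -> same_edge u v x' y'.
Proof. by rewrite /same_edge => -[[-> ->]|[-> ->]] [[-> ->]|[-> ->]]; tauto. Qed.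

Lemma same_edge_disjoint {V : Type} {a b c d u v x y : V} :
  a <> c -> a <> d -> b <> c -> b <> d ->
  same_edge u v a b -> same_edge x y c d -> u <> x /\ u <> y /\ v <> x /\ v <> y.
Proof.
by move=> ? ? ? ? [[-> ->]|[-> ->]] [[-> ->]|[-> ->]]; do !split.
Qed.

Section OneCrossing.

Context {G : graph} {pos : vert G -> point} {arc : vert G -> vert G -> R -> point}.
Context {a b c d : vert G} {p : point}.
Hypothesis good : good_drawing pos arc.
Hypotheses (ac : a <> c) (ad : a <> d) (bc : b <> c) (bd : b <> d).
Hypothesis only_crossing : forall u v x y q, crossing arc u v x y q ->
  q = p /\ ((same_edge u v a b /\ same_edge x y c d) \/
            (same_edge u v c d /\ same_edge x y a b)).

Lemma one_crossing_one_planar : one_planar_drawing pos arc.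
Proof.
split; first exact: good.
split.
- move=> u v x y q /only_crossing [_ [[uv xy]|[uv xy]]].
    exact: same_edge_disjoint ac ad bc bd uv xy.
  exact: same_edge_disjoint (nesym ac) (nesym bc) (nesym ad) (nesym bd) uv xy.
- move=> u v x y q x' y' q' /only_crossing [-> E] /only_crossing [-> E']; split=> //.
  have ab_cd : ~ (same_edge u v a b /\ same_edge u v c d).
    by move=> [uv uv']; have [] := same_edge_disjoint ac ad bc bd uv uv'.
  case: E E' => -[uv xy] [[uv' xy']|[uv' xy']];
    first [ exact: same_edge_trans xy (same_edge_sym xy')
          | by case: ab_cd; split ].
Qed.

Lemma one_crossing_class_C0 : class_C0 G.
Proof.
exists pos, arc; split; first exact: one_crossing_one_planar.
move=> u v x y q u' v' x' y' q' /only_crossing [-> _] /only_crossing [-> _].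
by case.
Qed.

End OneCrossing.

Lemma adj_false_contra {G : graph} {u v : vert G} :
  adj u v -> adj u v = false -> False.
Proof. by move=> ->. Qed.

Ltac vertex_cases vertP v :=
  destruct (vertP v) as [ -> | [ -> | [ -> | [ -> | [ -> | -> ] ] ] ] ].

Ltac drop_nonedge uv := first [exfalso; exact (adj_false_contra uv (erefl _)) | idtac].

Ltac same_edge_tac :=
  rewrite /same_edge; first [left; split; reflexivity | right; split; reflexivity].

(* Exhaustive check over all end vertices: each case is a linear system in
   the crossing parameters, refuted or solved by [lra]. *)
Ltac solve_crossing vertP :=
  intros u v x y q cr; destruct cr as [uv [xy [ne [s [t [s01 [t01 [<- E]]]]]]]];
  vertex_cases vertP u; vertex_cases vertP v; drop_nonedge uv;
  vertex_cases vertP x; vertex_cases vertP y; drop_nonedge xy;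
  try (exfalso; apply: ne; same_edge_tac);
  unfold straight, seg in E |- *; simpl in E |- *; injection E; intros;
  first [ exfalso; lra
        | split; [ f_equal; lra
                 | first [ left; split; same_edge_tac | right; split; same_edge_tac ] ] ].

Ltac solve_injective vertP :=
  intros a b; vertex_cases vertP a; vertex_cases vertP b;
  intros E; try reflexivity; injection E; intros; lra.

Ltac solve_avoid vertP :=
  intros u v t w uv t01;
  vertex_cases vertP u; vertex_cases vertP v; drop_nonedge uv; vertex_cases vertP w;
  unfold seg; simpl; intros E; injection E; intros; lra.

Definition G1 := gjoin (cycle_graph 3) (dunion (path_graph 2) (path_graph 1)).
Notation a0 := (@inl 'I_3 ('I_2 + 'I_1) (@Ordinal 3 0 (erefl true))).
Notation a1 := (@inl 'I_3 ('I_2 + 'I_1) (@Ordinal 3 1 (erefl true))).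
Notation a2 := (@inl 'I_3 ('I_2 + 'I_1) (@Ordinal 3 2 (erefl true))).
Notation a3 := (@inr 'I_3 ('I_2 + 'I_1) (@inl 'I_2 'I_1 (@Ordinal 2 0 (erefl true)))).
Notation a4 := (@inr 'I_3 ('I_2 + 'I_1) (@inl 'I_2 'I_1 (@Ordinal 2 1 (erefl true)))).
Notation a5 := (@inr 'I_3 ('I_2 + 'I_1) (@inr 'I_2 'I_1 (@Ordinal 1 0 (erefl true)))).

Lemma G1_vertP (v : vert G1) : v = a0 \/ v = a1 \/ v = a2 \/ v = a3 \/ v = a4 \/ v = a5.
Proof.
case: v => [i|[i|i]]; case: i => [[|[|[|n]]] Hi] //=;
  rewrite ?(eq_irrelevance Hi (erefl true)); tauto.
Qed.

Definition G1_pos (v : vert G1) : point :=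
  match v with
  | inl i => match nat_of_ord i with 0%nat => (4, 1) | 1%nat => (4, 4) | _ => (6, 6) end
  | inr (inl i) => match nat_of_ord i with 0%nat => (0, 5) | _ => (2, 5) end
  | inr (inr _) => (5, 4)
  end.

Lemma G1_good : good_drawing G1_pos (straight G1_pos).
Proof.
apply: straight_good_drawing; [solve_injective G1_vertP | solve_avoid G1_vertP].
Qed.

Lemma G1_only_crossing u v x y q : crossing (straight G1_pos) u v x y q ->
  q = (16/7, 31/7) /\
  ((same_edge u v a0 a4 /\ same_edge x y a1 a3) \/
   (same_edge u v a1 a3 /\ same_edge x y a0 a4)).
Proof. move: u v x y q; solve_crossing G1_vertP. Qed.

Definition G2 := gjoin (path_graph 3) (path_graph 3).
Notation b0 := (@inl 'I_3 'I_3 (@Ordinal 3 0 (erefl true))).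
Notation b1 := (@inl 'I_3 'I_3 (@Ordinal 3 1 (erefl true))).
Notation b2 := (@inl 'I_3 'I_3 (@Ordinal 3 2 (erefl true))).
Notation b3 := (@inr 'I_3 'I_3 (@Ordinal 3 0 (erefl true))).
Notation b4 := (@inr 'I_3 'I_3 (@Ordinal 3 1 (erefl true))).
Notation b5 := (@inr 'I_3 'I_3 (@Ordinal 3 2 (erefl true))).

Lemma G2_vertP (v : vert G2) : v = b0 \/ v = b1 \/ v = b2 \/ v = b3 \/ v = b4 \/ v = b5.
Proof.
case: v => [i|i]; case: i => [[|[|[|n]]] Hi] //=;
  rewrite ?(eq_irrelevance Hi (erefl true)); tauto.
Qed.

Definition G2_pos (v : vert G2) : point :=
  match v with
  | inl i => match nat_of_ord i with 0%nat => (2, 5) | 1%nat => (2, 6) | _ => (6, 4) end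
  | inr i => match nat_of_ord i with 0%nat => (4, 4) | 1%nat => (1, 2) | _ => (0, 1) end
  end.

Lemma G2_good : good_drawing G2_pos (straight G2_pos).
Proof.
apply: straight_good_drawing; [solve_injective G2_vertP | solve_avoid G2_vertP].
Qed.

Lemma G2_only_crossing u v x y q : crossing (straight G2_pos) u v x y q ->
  q = (3/2, 4) /\
  ((same_edge u v b0 b5 /\ same_edge x y b1 b4) \/
   (same_edge u v b1 b4 /\ same_edge x y b0 b5)).
Proof. move: u v x y q; solve_crossing G2_vertP. Qed.

Theorem lemma7 :
  class_C0 (gjoin (cycle_graph 3) (dunion (path_graph 2) (path_graph 1))) /\
  class_C0 (gjoin (path_graph 3) (path_graph 3)).
Proof.
split.
- by apply: (one_crossing_class_C0 G1_good _ _ _ _ G1_only_crossing).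
- by apply: (one_crossing_class_C0 G2_good _ _ _ _ G2_only_crossing).
Qed.
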